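(* Let $m,n\ge 2$ and let $RC(3,m,n)$ be the set of all real vectors $\{P(a,b,c|x,y,z)\}_{a,b,c\in\{1,\dots,n\},\,x,y,z\in\{1,\dots,m\}}$ satisfying $P(a,b,c|x,y,z)\ge 0$, $\sum_{a,b,c}P(a,b,c|x,y,z)=1$ for all $x,y,z$, and the relativistic causal constraints: (i) $\sum_a P(a,b,c|x,y,z)=\sum_a P(a,b,c|x',y,z)$ for all $x,x',y,z,b,c$; (ii) $\sum_c P(a,b,c|x,y,z)=\sum_c P(a,b,c|x,y,z')$ for all $z,z',x,y,a,b$; (iii) $\sum_{b,c} P(a,b,c|x,y,z)=\sum_{b,c} P(a,b,c|x,y',z')$ for all $y,y',z,z',x,a$; (iv) $\sum_{a,b} P(a,b,c|x,y,z)=\sum_{a,b} P(a,b,c|x',y',z)$ for all $x,x',y,y',z,c$. Then the dimension of the polytope $RC(3,m,n)$ (i.e. of its affine hull in $\mathbb{R}^{(mn)^3}$) equals $$[m(n-1)+1]^{3}+m^{2}(m-1)(n-1)^{2}-1.$$ *)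

From HB Require Import structures.
From mathcomp Require Import all_boot all_order all_algebra.
From mathcomp Require Import reals.
Set Implicit Arguments. Unset Strict Implicit. Unset Printing Implicit Defensive.
Import Order.TTheory GRing.Theory Num.Theory.
Local Open Scope ring_scope.

Definition idx (m n : nat) : finType :=
  ('I_n * 'I_n * 'I_n * ('I_m * 'I_m * 'I_m))%type.

Definition pt (R : realType) (m n : nat) := {ffun idx m n -> R^o}.

Definition PP (R : realType) m n (p : pt R m n) a b c x y z : R :=
  p ((a, b, c), (x, y, z)).

Definition RC (R : realType) (m n : nat) (p : pt R m n) : Prop :=
  (forall a b c x y z, 0 <= PP p a b c x y z) /\
  (forall x y z, \sum_a \sum_b \sum_c PP p a b c x y z = 1) /\
  [/\ (forall x x' y z b c,
          \sum_a PP p a b c x y z = \sum_a PP p a b c x' y z),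
      (forall z z' x y a b,
          \sum_c PP p a b c x y z = \sum_c PP p a b c x y z'),
      (forall y y' z z' x a,
          \sum_b \sum_c PP p a b c x y z = \sum_b \sum_c PP p a b c x y' z')
    & (forall x x' y y' z c,
          \sum_a \sum_b PP p a b c x y z = \sum_a \sum_b PP p a b c x' y' z)].

(* Affine dimension: S has affine-hull dimension d iff the linear span U of
   all differences p - q (p, q in S) -- the direction space of aff(S) --
   has dimension d. *)
Definition affine_dim (F : fieldType) (vT : vectType F) (S : vT -> Prop)
    (d : nat) : Prop :=
  exists U : {vspace vT},
    [/\ (forall p q, S p -> S q -> p - q \in U),
        (exists s : seq (vT * vT),
            (forall pq, pq \in s -> S pq.1 /\ S pq.2) /\
            U = <<[seq pq.1 - pq.2 | pq <- s]>>%VS)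
      & \dim U = d].

From HB Require Import structures.
From mathcomp Require Import all_boot all_order all_algebra ring lra.
From mathcomp Require Import reals.
Set Implicit Arguments. Unset Strict Implicit. Unset Printing Implicit Defensive.
Import Order.TTheory GRing.Theory Num.Theory.
Local Open Scope ring_scope.

(* In every probability P(a,b,c|x,y,z) whose output a is the last
   one, replace P by its marginal over a (likewise for b and c).  This invertible
   triangular change of coordinates turns the homogeneous causal constraints
   into "the coordinate at outputs (last, last, last) vanishes" and "a
   coordinate whose output a (resp. c, resp. b together with a or c) is the
   last one does not depend on the input x (resp. z, resp. y)".  The solutions
   are thus freely parametrised by the coordinates whose irrelevant inputs are
   already 0, and counting these gives the formula.  The uniform distribution
   lies in the relative interior of RC, so the direction of the affine hull of
   RC is the whole solution space. *)

Section AffineDim.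
Variables (F : fieldType) (vT : vectType F).

Lemma vlineZ (e : F) (v : vT) : e != 0 -> (<[e *: v]> = <[v]>)%VS.
Proof.
move=> e_nz; apply/eqP; rewrite eqEsubv -!memvE memvZ ?memv_line //=.
by rewrite -[v in v \in _](scalerK e_nz) memvZ ?memv_line.
Qed.

Lemma dim_lpreim_lker0 (f : 'End(vT)) (W : {vspace vT}) :
  lker f == 0%VS -> \dim (f @^-1: W) = \dim W.
Proof.
move=> kerf0; have Wf : (W <= limg f)%VS by rewrite lker0_limgf ?subvf.
by rewrite -[in RHS](lpreimK Wf) limg_dim_eq // (eqP kerf0) capv0.
Qed.

Variables (S : vT -> Prop) (U : {vspace vT}) (u : vT).
Hypotheses (Su : S u) (S_dir : forall p q, S p -> S q -> p - q \in U).
Hypothesis S_open : forall v, v \in U -> exists2 e : F, e != 0 & S (u + e *: v).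

Lemma span_differences (X : seq vT) : {subset X <= U} ->
  exists s : seq (vT * vT), (forall pq, pq \in s -> S pq.1 /\ S pq.2) /\
    <<[seq pq.1 - pq.2 | pq <- s]>>%VS = <<X>>%VS.
Proof.
elim: X => [|v X IHX] XU; first by exists [::].
have [|s [sS sX]] := IHX; first by move=> w Xw; apply: XU; rewrite inE Xw orbT.
have [e e_nz Sv] := S_open (XU v (mem_head v X)).
exists ((u + e *: v, u) :: s); split.
  by move=> pq; rewrite inE => /predU1P [-> //|]; apply: sS.
by rewrite /= !span_cons sX addrAC subrr add0r vlineZ.
Qed.

Lemma affine_dim_interior : affine_dim S (\dim U).
Proof.
exists U; split=> //.
have [s [sS sU]] := span_differences (fun v => @vbasis_mem _ _ v U).
by exists s; rewrite sU (span_basis (vbasisP U)).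
Qed.

End AffineDim.

Section MarginalSelection.
Variables (R : zmodType) (n : nat).

Definition msel (al a : 'I_n.+1) : bool := (al == ord_max) || (a == al).

Lemma msel_sum_inj (h h' : 'I_n.+1 -> R) :
  (forall al, \sum_(a | msel al a) h a = \sum_(a | msel al a) h' a) -> h =1 h'.
Proof.
move=> eq_h.
have eq_off a : a != ord_max -> h a = h' a.
  by move=> /negbTE a_nmax; have := eq_h a; rewrite /msel a_nmax !big_pred1_eq.
move=> a; have [->|/eq_off//] := eqVneq a ord_max.
have := eq_h ord_max; rewrite /msel eqxx /=.
rewrite (bigD1 ord_max) // [X in _ = X -> _](bigD1 ord_max) //=.
by rewrite (eq_bigr h') => [/addIr|i /eq_off].
Qed.

Lemma msel_sum2_inj (h h' : 'I_n.+1 -> 'I_n.+1 -> R) :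
  (forall al be, \sum_(a | msel al a) \sum_(b | msel be b) h a b =
                 \sum_(a | msel al a) \sum_(b | msel be b) h' a b) ->
  forall a b, h a b = h' a b.
Proof.
move=> eq_h a; apply: msel_sum_inj => be.
by move: a; apply: msel_sum_inj => al; apply: eq_h.
Qed.

Lemma msel_sum3_inj (h h' : 'I_n.+1 -> 'I_n.+1 -> 'I_n.+1 -> R) :
  (forall al be ga,
     \sum_(a | msel al a) \sum_(b | msel be b) \sum_(c | msel ga c) h a b c =
     \sum_(a | msel al a) \sum_(b | msel be b) \sum_(c | msel ga c) h' a b c) ->
  forall a b c, h a b c = h' a b c.
Proof.
move=> eq_h a b c; move: b c; apply: msel_sum2_inj => be ga.
by move: a; apply: msel_sum_inj => al; apply: eq_h.
Qed.

Lemma sum3_rotl (P Q S : pred 'I_n.+1) (F : 'I_n.+1 -> 'I_n.+1 -> 'I_n.+1 -> R) :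
  \sum_(a | P a) \sum_(b | Q b) \sum_(c | S c) F a b c =
  \sum_(b | Q b) \sum_(c | S c) \sum_(a | P a) F a b c.
Proof. by rewrite exchange_big; apply: eq_bigr => b _; rewrite exchange_big. Qed.

Lemma sum3_rotr (P Q S : pred 'I_n.+1) (F : 'I_n.+1 -> 'I_n.+1 -> 'I_n.+1 -> R) :
  \sum_(a | P a) \sum_(b | Q b) \sum_(c | S c) F a b c =
  \sum_(c | S c) \sum_(a | P a) \sum_(b | Q b) F a b c.
Proof. by under eq_bigr do rewrite exchange_big; rewrite exchange_big. Qed.

End MarginalSelection.

Section MarginalCoordinates.
Variables (R : realType) (m n : nat).
Notation PT := (pt R m.+1 n.+1).
Notation l := (@ord_max n).

(* [RC p] unfolds to nonnegativity together with [causal p 1]. *)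
Definition causal (p : PT) (k : R) : Prop :=
  (forall x y z, \sum_a \sum_b \sum_c PP p a b c x y z = k) /\
  [/\ (forall x x' y z b c,
          \sum_a PP p a b c x y z = \sum_a PP p a b c x' y z),
      (forall z z' x y a b,
          \sum_c PP p a b c x y z = \sum_c PP p a b c x y z'),
      (forall y y' z z' x a,
          \sum_b \sum_c PP p a b c x y z = \sum_b \sum_c PP p a b c x y' z')
    & (forall x x' y y' z c,
          \sum_a \sum_b PP p a b c x y z = \sum_a \sum_b PP p a b c x' y' z)].

Definition marginalize (f : PT) : PT :=
  [ffun i => let: ((al, be, ga), (x, y, z)) := i in
     \sum_(a | msel al a) \sum_(b | msel be b) \sum_(c | msel ga c)
        f ((a, b, c), (x, y, z))].

Lemma marginalize_is_linear : linear marginalize.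
Proof.
move=> k f g; apply/ffunP => -[[[al be] ga] [[x y] z]]; rewrite !ffunE /=.
under eq_bigr do under eq_bigr do under eq_bigr do rewrite !ffunE.
by rewrite scaler_sumr -big_split; apply: eq_bigr => a _;
   rewrite scaler_sumr -big_split; apply: eq_bigr => b _;
   rewrite scaler_sumr -big_split.
Qed.

HB.instance Definition _ :=
  GRing.isLinear.Build R PT PT *:%R marginalize marginalize_is_linear.

Lemma marginalize_inj : injective marginalize.
Proof.
move=> f g efg; apply/ffunP => -[[[a b] c] [[x y] z]].
move: a b c; apply: msel_sum3_inj => al be ga.
by have := congr1 (fun F : PT => F ((al, be, ga), (x, y, z))) efg; rewrite !ffunE.
Qed.

Definition causal_marg (F : PT) : Prop :=
 [/\ forall x y z, F ((l, l, l), (x, y, z)) = 0,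
     forall x x' y z b c, F ((l, b, c), (x, y, z)) = F ((l, b, c), (x', y, z)),
     forall z z' x y a b, F ((a, b, l), (x, y, z)) = F ((a, b, l), (x, y, z')),
     forall y y' z z' x a, F ((a, l, l), (x, y, z)) = F ((a, l, l), (x, y', z')) &
     forall x x' y y' z c, F ((l, l, c), (x, y, z)) = F ((l, l, c), (x', y', z))].

Lemma causal0_marginalize f : causal f 0 <-> causal_marg (marginalize f).
Proof.
split=> [[sum0 [cx cz cyz cxy]] | [mlll mx mz myz mxy]].
  split=> [x y z | x x' y z b c | z z' x y a b | y y' z z' x a | x x' y y' z c];
    rewrite !ffunE /msel !eqxx /=.
  - exact: sum0.
  - rewrite [LHS]sum3_rotl [RHS]sum3_rotl.
    by apply: eq_bigr => b' _; apply: eq_bigr => c' _; apply: cx.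
  - by apply: eq_bigr => a' _; apply: eq_bigr => b' _; apply: cz.
  - by apply: eq_bigr => a' _; apply: cyz.
  - rewrite [LHS]sum3_rotr [RHS]sum3_rotr.
    by apply: eq_bigr => c' _; apply: cxy.
split; last split.
- by move=> x y z; have := mlll x y z; rewrite ffunE /msel eqxx.
- move=> x x' y z; apply: msel_sum2_inj => be ga; rewrite -[LHS]sum3_rotl -[RHS]sum3_rotl.
  by have := mx x x' y z be ga; rewrite !ffunE /msel eqxx.
- move=> z z' x y; apply: msel_sum2_inj => al be.
  by have := mz z z' x y al be; rewrite !ffunE /msel eqxx.
- move=> y y' z z' x; apply: msel_sum_inj => al.
  by have := myz y y' z z' x al; rewrite !ffunE /msel eqxx.
- move=> x x' y y' z; apply: msel_sum_inj => ga; rewrite -[LHS]sum3_rotr -[RHS]sum3_rotr.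
  by have := mxy x x' y y' z ga; rewrite !ffunE /msel eqxx.
Qed.

End MarginalCoordinates.

Section Retraction.
Variables (R : realType) (m n : nat).
Notation I := (idx m.+1 n.+1).
Notation PT := (pt R m.+1 n.+1).
Notation l := (@ord_max n).
Notation o := (@ord0 m).

Definition canon (i : I) : I :=
  let: ((a, b, c), (x, y, z)) := i in
  ((a, b, c), (if a == l then o else x,
               if (b == l) && ((a == l) || (c == l)) then o else y,
               if c == l then o else z)).

Definition free_coord (i : I) : bool := (canon i == i) && (i.1 != (l, l, l)).

Lemma free_coord_canon i : free_coord (canon i) = (i.1 != (l, l, l)).
Proof.
case: i => [[[a b] c] [[x y] z]]; rewrite /free_coord /=.
by case: (a == l); case: (b == l); case: (c == l); rewrite /= ?eqxx.
Qed.

Lemma causal_marg_canon (F : PT) i : causal_marg F -> F (canon i) = F i.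
Proof.
case=> mlll mx mz myz mxy; case: i => [[[a b] c] [[x y] z]]; rewrite /canon.
have [->|na] := eqVneq a l; have [->|nc] := eqVneq c l;
  have [->|nb] := eqVneq b l; rewrite ?eqxx ?(negbTE na) ?(negbTE nb) ?(negbTE nc) //=.
- by rewrite !mlll.
- by rewrite (mx o x y o) (mz o z).
Qed.

Notation K := {i : I | free_coord i}.

Definition extend (g : {ffun K -> R^o}) : PT :=
  [ffun i => if insub (canon i) is Some k then g k else 0].

Lemma extend_is_linear : linear extend.
Proof.
move=> k f g; apply/ffunP => i; rewrite !ffunE.
by case: (insub (canon i)) => [j|]; rewrite ?ffunE // scaler0 addr0.
Qed.

HB.instance Definition _ :=
  GRing.isLinear.Build R {ffun K -> R^o} PT *:%R extend extend_is_linear.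

Lemma extend_inj : injective extend.
Proof.
move=> f g efg; apply/ffunP => k.
have := congr1 (fun F : PT => F (val k)) efg.
by rewrite !ffunE (eqP (andP (valP k)).1) valK.
Qed.

Lemma causal_marg_extend g : causal_marg (extend g).
Proof.
split=> [x y z|*|*|*|*]; rewrite !ffunE.
  by rewrite insubF // free_coord_canon /= eqxx.
all: by rewrite /canon eqxx ?orbT.
Qed.

Lemma extend_restrict F : causal_marg F -> F = extend [ffun k => F (val k)].
Proof.
move=> mF; apply/ffunP => i; rewrite ffunE.
case: insubP => [k _ val_k|]; first by rewrite ffunE val_k causal_marg_canon.
rewrite free_coord_canon negbK; case: i => [[[a b] c] [[x y] z]] /= /eqP [-> -> ->].
by case: mF.
Qed.

End Retraction.

Section CausalDirection.
Variables (R : realType) (m n : nat).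
Notation PT := (pt R m.+1 n.+1).
Notation K := {i : idx m.+1 n.+1 | free_coord i}.

Definition causal_dir : {vspace PT} :=
  (linfun (@marginalize R m n) @^-1: limg (linfun (@extend R m n)))%VS.

Lemma mem_causal_dir v : v \in causal_dir <-> causal v 0.
Proof.
rewrite -memv_preim lfunE /= causal0_marginalize; split.
  by case/memv_imgP => g _ ->; rewrite lfunE; apply: causal_marg_extend.
move=> /extend_restrict ->; apply/memv_imgP; exists [ffun k => marginalize v (val k)].
  exact: memvf.
by rewrite lfunE.
Qed.

Lemma dim_causal_dir : \dim causal_dir = #|{: K}|.
Proof.
rewrite dim_lpreim_lker0; last by apply/lker0P => f g; rewrite !lfunE; apply: marginalize_inj.
have ker0 : lker (linfun (@extend R m n)) == 0%VS.
  by apply/lker0P => f g; rewrite !lfunE; apply: extend_inj.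
by rewrite limg_dim_eq ?(eqP ker0) ?capv0 // dimvf /dim /= muln1.
Qed.

End CausalDirection.

Lemma free_coordE m n a b c x y z :
  @free_coord m n ((a, b, c), (x, y, z)) =
  [&& (a == ord_max) ==> (x == ord0),
      ((b == ord_max) && ((a == ord_max) || (c == ord_max))) ==> (y == ord0),
      (c == ord_max) ==> (z == ord0)
    & ~~ [&& a == ord_max, b == ord_max & c == ord_max]].
Proof.
rewrite /free_coord /= !xpair_eqE !eqxx /=.
by case: (a == _); case: (b == _); case: (c == _);
  rewrite /= ?eqxx ?andbT ?andbF ?(eq_sym ord0).
Qed.

Local Close Scope ring_scope.

Lemma sum_pair (T1 T2 : finType) (F : T1 * T2 -> nat) :
  \sum_(p : T1 * T2) F p = \sum_(u : T1) \sum_(v : T2) F (u, v).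
Proof. by rewrite pair_bigA; apply: eq_bigr => -[u v]. Qed.

Lemma sum_ord_max_split n (F : 'I_n.+1 -> nat) :
  (forall a, a != ord_max -> F a = F ord0) -> \sum_a F a = F ord_max + n * F ord0.
Proof.
move=> F_off; rewrite big_ord_recr /= addnC; congr (_ + _).
rewrite (eq_bigr (fun _ => F ord0)) ?sum_nat_const ?card_ord // => i _.
by apply: F_off; rewrite neq_ltn /= ltn_ord.
Qed.

Lemma sum_ord0_split m (F : 'I_m.+1 -> nat) :
  (forall a, a != ord0 -> F a = F ord_max) -> \sum_a F a = F ord0 + m * F ord_max.
Proof.
move=> F_off; rewrite big_ord_recl /=; congr (_ + _).
rewrite (eq_bigr (fun _ => F ord_max)) ?sum_nat_const ?card_ord // => i _.
by apply: F_off.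
Qed.

Lemma card_free_coord m n : 0 < m -> 0 < n ->
  #|[pred i : idx m.+1 n.+1 | free_coord i]| =
  (m.+1 * n + 1) ^ 3 + m.+1 ^ 2 * m * n ^ 2 - 1.
Proof.
move=> m_gt0 n_gt0.
have ord0_max : (@ord0 n == ord_max) = false by rewrite eqE /= eq_sym gtn_eqF.
have max_ord0 : (@ord_max m == ord0) = false by rewrite eqE /= gtn_eqF.
rewrite -sum1_card big_mkcond /= !sum_pair.
under eq_bigr => a _ do under eq_bigr => b _ do under eq_bigr => c _ do
  rewrite !sum_pair.
under eq_bigr => a _ do under eq_bigr => b _ do under eq_bigr => c _ do
  under eq_bigr => x _ do under eq_bigr => y _ do under eq_bigr => z _ do
  rewrite inE free_coordE.
do ![rewrite (@sum_ord_max_split n); last by move=> ? /negbTE ->; rewrite ?ord0_max].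
do ![rewrite (@sum_ord0_split m); last by move=> ? /negbTE ->; rewrite ?max_ord0].
rewrite /= ?eqxx ?ord0_max ?max_ord0 /=.
apply/eqP; rewrite -(eqn_add2r 1) subnK; first by apply/eqP; ring.
by rewrite addn_gt0 expn_gt0 addn1.
Qed.

Local Open Scope ring_scope.

Section Interior.
Variables (R : realType) (m n : nat).
Notation PT := (pt R m.+1 n.+1).

Lemma PP_lin (k : R) (p q : PT) a b c x y z :
  PP (k *: p + q) a b c x y z = k * PP p a b c x y z + PP q a b c x y z.
Proof. by rewrite /PP !ffunE. Qed.

Lemma sumr_lin (J : finType) (F G : J -> R) (k : R) :
  \sum_j (k * F j + G j) = k * \sum_j F j + \sum_j G j.
Proof. by rewrite big_split mulr_sumr. Qed.

Lemma causal_lin (k k1 k2 : R) (p q : PT) :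
  causal p k1 -> causal q k2 -> causal (k *: p + q) (k * k1 + k2).
Proof.
move=> [p1 [px pz pyz pxy]] [q1 [qx qz qyz qxy]].
split; last split=> [x x' y z b c | z z' x y a b | y y' z z' x a | x x' y y' z c].
- move=> x y z; under eq_bigr do under eq_bigr do under eq_bigr do rewrite PP_lin.
  by under eq_bigr do under eq_bigr do rewrite sumr_lin; under eq_bigr do rewrite sumr_lin;
     rewrite sumr_lin p1 q1.
- under eq_bigr do rewrite PP_lin; under [RHS]eq_bigr do rewrite PP_lin.
  by rewrite !sumr_lin (px x x') (qx x x').
- under eq_bigr do rewrite PP_lin; under [RHS]eq_bigr do rewrite PP_lin.
  by rewrite !sumr_lin (pz z z') (qz z z').
- under eq_bigr do under eq_bigr do rewrite PP_lin.
  under [RHS]eq_bigr do under eq_bigr do rewrite PP_lin.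
  under eq_bigr do rewrite sumr_lin; under [RHS]eq_bigr do rewrite sumr_lin.
  by rewrite !sumr_lin (pyz y y' z z') (qyz y y' z z').
- under eq_bigr do under eq_bigr do rewrite PP_lin.
  under [RHS]eq_bigr do under eq_bigr do rewrite PP_lin.
  under eq_bigr do rewrite sumr_lin; under [RHS]eq_bigr do rewrite sumr_lin.
  by rewrite !sumr_lin (pxy x x' y y') (qxy x x' y y').
Qed.

Definition unif_mass : R := (n.+1 ^ 3)%:R^-1.

Definition uniform : PT := [ffun => unif_mass].

Lemma unif_mass_gt0 : 0 < unif_mass.
Proof. by rewrite invr_gt0 ltr0n expn_gt0. Qed.

Lemma RC_uniform : RC uniform.
Proof.
split; first by move=> *; rewrite /PP ffunE ltW // unif_mass_gt0.
split; last by split=> *; do 2?[apply: eq_bigr => * ]; rewrite /PP !ffunE.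
move=> x y z; rewrite /PP.
under eq_bigr do under eq_bigr do under eq_bigr do rewrite ffunE.
rewrite !sumr_const !card_ord -!mulrnA mulnn -expnS -mulr_natr mulVf //.
by rewrite pnatr_eq0 -lt0n expn_gt0.
Qed.

Lemma RC_uniform_perturb v : causal v 0 ->
  exists2 e : R, e != 0 & RC (uniform + e *: v).
Proof.
move=> v0; set e := unif_mass / (1 + \sum_j `|v j|).
have sum_ge0 : 0 <= \sum_j `|v j| by rewrite sumr_ge0.
have e_gt0 : 0 < e by rewrite divr_gt0 ?unif_mass_gt0 ?ltr_pwDl.
exists e; first by rewrite gt_eqF.
split; last first.
  by rewrite addrC; have := causal_lin e v0 (proj2 RC_uniform); rewrite mulr0 add0r.
move=> a b c x y z; rewrite /PP !ffunE; set i := (_, _).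
change (0 <= unif_mass + e * v i).
have vi_le : `|v i| <= \sum_j `|v j| by rewrite (bigD1 i) //= lerDl sumr_ge0.
have evi_le : e * `|v i| <= unif_mass.
  by rewrite mulrAC ler_pdivrMr ?ltr_pwDl // ler_pM2l ?unif_mass_gt0 //; lra.
have evi_ge : - (e * `|v i|) <= e * v i.
  by apply: lerNnormlW; rewrite normrM (gtr0_norm e_gt0).
lra.
Qed.

End Interior.

Theorem mainTheorem2 (R : realType) (m n : nat) (hm : (2 <= m)%N) (hn : (2 <= n)%N) :
  affine_dim (@RC R m n)
    ((m * (n - 1) + 1) ^ 3 + m ^ 2 * (m - 1) * (n - 1) ^ 2 - 1)%N.
Proof.
case: m hm => // m hm; case: n hn => // n hn; rewrite !subn1 /= -subn1.
rewrite -(@card_free_coord m n hm hn) -card_sig -(dim_causal_dir R).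
apply: (affine_dim_interior (u := uniform R m n)); first exact: RC_uniform.
- move=> p q [_ p1] [_ q1]; apply/mem_causal_dir.
  by have := causal_lin (-1) q1 p1; rewrite scaleN1r addrC mulN1r addNr.
- by move=> v /mem_causal_dir; apply: RC_uniform_perturb.
Qed.
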